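(* Let $(P,H,\phi)$ be a host-parasite triple and let $\Psi=\{\psi_1,\dots,\psi_l\}\subseteq\mathcal R(P,H,\phi)$ with $l\ge1$. Then $\psi^{\Psi}_{med}$ is a geometric median for $\Psi$ in $\mathcal R(P,H,\phi)$ endowed with the metric $d_{edit}$ $(=d_{path})$; that is, for every $\psi\in\mathcal R(P,H,\phi)$, $$\sum_{i=1}^l d_{edit}(\psi^{\Psi}_{med},\psi_i)\le\sum_{i=1}^l d_{edit}(\psi,\psi_i).$$
   Context: A phylogenetic tree $T$ is a finite rooted tree with root $\rho_T$ (indegree $0$, outdegree $2$), in which every vertex other than the root and the leaves has indegree $1$ and outdegree $2$; $V(T)$ is its vertex set, $L(T)$ its leaf set, $V^o(T)=V(T)-L(T)$. For $v\in V^o(T)$, $Ch(v)$ is the set of children of $v$; for $v\ne\rho_T$, $par(v)$ is its parent. $x\succeq_T y$ means $x$ lies on the path from $\rho_T$ to $y$; $x\succ_T y$ means $x\succeq_T y$ and $x\ne y$. For $L\subseteq L(T)$ with $|L|\ge 2$, $lca_T(L)$ is the lowest vertex above every element of $L$; if $L=\{x\}$ then $lca_T(L)=x$. $d_T(v,w)$ is the number of edges on the (undirected) path in $T$ between $v$ and $w$. A host-parasite triple $(P,H,\phi)$ consists of two phylogenetic trees $P,H$ and a map $\phi:L(P)\to L(H)$. A reconciliation map is a map $\psi:V(P)\to V(H)$ such that (i) $\psi$ restricted to $L(P)$ equals $\phi$, and (ii) for every $v\in V^o(P)$ and every child $v'$ of $v$, $\psi(v)\succeq_H\psi(v')$; $\mathcal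 R(P,H,\phi)$ is the set of all of them. For $v\in V(P)$ let $m(v)=lca_H(\{\phi(x): x\in L(P),\ v\succeq_P x\})$ and $A(v)=\{w\in V(H): \rho_H\succeq_H w\succeq_H m(v)\}$. Up operation: given $\psi\in\mathcal R(P,H,\phi)$ and $w\in V(P)$ with $\psi(w)\notin\{\rho_H,\psi(par(w))\}$ (second condition vacuous if $w=\rho_P$), $\psi^{up}_w$ agrees with $\psi$ except $\psi^{up}_w(w)=par(\psi(w))$. Down operation: given $\psi\in\mathcal R(P,H,\phi)$ and $w\in V^o(P)$ with $\psi(w)\succ_H m(w)$ and $\psi(w)\ne\psi(v')$ for all $v'\in Ch(w)$, $\psi^{down}_w$ agrees with $\psi$ except that $\psi^{down}_w(w)$ is the unique vertex of $A(w)\cap Ch(\psi(w))$. $d_{edit}(\psi,\psi')$ is the smallest number of up/down operations transforming $\psi$ into $\psi'$; it equals $d_{path}(\psi,\psi')=\sum_{v\in V(P)}d_H(\psi(v),\psi'(v))$. For a finite multiset $A$ of reals, $med(A)$ is its median (average of the two middle elements for even cardinality); for real $r$, $[r]$ is the nearest integer, the larger one in case of a tie; for integers $n_1,\dots,n_l$, $zmed(n_1,\dots,n_l)=[med(\{n_1,\dots,n_l\})]$. The map $\psi^{\Psi}_{med}:V(P)\to V(H)$ is defined by letting $\psi^{\Psi}_{med}(v)$, for $v\in V(P)$, be the element $w\in A(v)$ with $d_H(m(v),w)=zmed(n_1,\dots,n_l)$, where $n_i=d_H(m(v),\psi_i(v))$. *)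

From HB Require Import structures.
From mathcomp Require Import all_boot all_order all_algebra.
Set Implicit Arguments. Unset Strict Implicit. Unset Printing Implicit Defensive.
Import Order.TTheory GRing.Theory Num.Theory.

(* A rooted tree on a finite vertex type T is given by its root [rt] and a
   parent map [par] ([par v = None] iff v is the root). *)
Section Tree.
Variables (T : finType) (rt : T) (par : T -> option T).

Fixpoint iterp (n : nat) (y : T) : option T :=
  if n is n'.+1 then obind par (iterp n' y) else Some y.

(* anc x y  <=>  x ⪰_T y  (x lies on the path from the root to y);
   in a tree every ancestor chain has fewer than #|T| steps. *)
Definition anc (x y : T) : bool := [exists n : 'I_#|T|, iterp n y == Some x].

Definition children (v : T) : {set T} := [set w | par w == Some v].
Definition is_leaf (v : T) : bool := children v == set0.

Definition is_phylo : Prop :=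
  [/\ par rt = None,
      forall v, v != rt -> par v != None,
      forall v, anc rt v,
      #|children rt| = 2 &
      forall v, #|children v| = 0 \/ #|children v| = 2].

Definition adj (u w : T) : bool := (par u == Some w) || (par w == Some u).
Fixpoint reach (n : nat) (u w : T) : bool :=
  if n is n'.+1 then [exists x, adj u x && reach n' x w] else u == w.
Definition dist (u w : T) : nat := find (fun n => reach n u w) (iota 0 #|T|).
Definition depth (v : T) : nat := dist rt v.

Definition lca (L : {set T}) : T :=
  [arg max_(w > rt | [forall x in L, anc w x]) depth w].

Definition leaves_below (v : T) : {set T} := [set x | is_leaf x && anc v x].
End Tree.

Local Open Scope ring_scope.
Definition med (s : seq nat) : rat :=
  let t := sort leq s in
  let k := size t in
  if odd k then (nth 0%N t k./2)%:R
  else ((nth 0%N t k./2.-1)%:R + (nth 0%N t k./2)%:R) / 2%:R.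
(* [r] : nearest integer, the larger one in case of a tie *)
Definition round_nearest (r : rat) : int := Num.floor (r + 2%:R^-1).
Definition zmed (s : seq nat) : nat := `|round_nearest (med s)|%N.
Local Close Scope ring_scope.

Section Recon.
Variables (TP : finType) (rP : TP) (parP : TP -> option TP)
          (TH : finType) (rH : TH) (parH : TH -> option TH)
          (phi : TP -> TH).

Definition is_recon (psi : TP -> TH) : Prop :=
  (forall x, is_leaf parP x -> psi x = phi x) /\
  (forall v v', parP v' = Some v -> anc parH (psi v) (psi v')).

Definition mlca (v : TP) : TH := lca rH parH (phi @: leaves_below parP v).

Definition dpath (psi psi' : TP -> TH) : nat :=
  \sum_(v : TP) dist parH (psi v) (psi' v).

Definition psi_med (l : nat) (psis : 'I_l -> TP -> TH) (v : TP) : TH :=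
  odflt rH [pick w | anc parH w (mlca v) &&
    (dist parH (mlca v) w == zmed [seq dist parH (mlca v) (psis i v) | i <- enum 'I_l])].
End Recon.

From mathcomp Require Import all_boot all_order all_algebra.
From mathcomp Require Import lra zify.
Import GRing.Theory Num.Theory.

Set Implicit Arguments.
Unset Strict Implicit.
Unset Printing Implicit Defensive.

(* Any reconciliation map sends v to an ancestor of m(v), and on the path from
   m(v) to the root d_H is the absolute difference of the distances to m(v).
   Hence the d_path-sum splits over the vertices v of P into sums
   \sum_i |c - n_i| with n_i = d_H(m(v), psi_i(v)), each minimised at c = zmed.
   Moving from v to a child v' shifts every n_i by at most d_H(m(v), m(v')),
   and zmed inherits this, so psi_med is again a reconciliation map. *)

Definition order_stat (s : seq nat) (j : nat) : nat := nth 0 (sort leq s) j.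

Lemma sorted_sort_leq (s : seq nat) : sorted leq (sort leq s).
Proof. exact/sort_sorted/leq_total. Qed.

Lemma count_sort_leq (p : pred nat) (s : seq nat) : count p (sort leq s) = count p s.
Proof. by apply/permP; rewrite perm_sort. Qed.

Lemma order_stat_ub (s : seq nat) (B j : nat) :
  {in s, forall x, x <= B} -> order_stat s j <= B.
Proof.
move=> sB; rewrite /order_stat; case: (ltnP j (size (sort leq s))) => hj.
  by apply: sB; rewrite -(mem_sort leq) mem_nth.
by rewrite nth_default.
Qed.

Lemma order_stat_mono (s : seq nat) (i j : nat) :
  i <= j -> j < size s -> order_stat s i <= order_stat s j.
Proof.
move=> ij js; apply: (sorted_leq_nth leq_trans leqnn 0 (sorted_sort_leq s)) => //.
  by rewrite inE size_sort (leq_ltn_trans ij js).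
by rewrite inE size_sort.
Qed.

Lemma count_lt_order_stat (s : seq nat) (j : nat) :
  j < size s -> count (fun y => y < order_stat s j) s <= j.
Proof.
move=> js; rewrite -count_sort_leq -[sort leq s](cat_take_drop j) count_cat.
have -> : count (fun y => y < order_stat s j) (drop j (sort leq s)) = 0.
  apply/eqP; rewrite -leqn0 leqNgt -has_count; apply/hasPn => y /(nthP 0) [i].
  rewrite size_drop size_sort nth_drop => hi <-; rewrite -leqNgt.
  have {}hi : i < size s - j := hi.
  by apply: order_stat_mono; lia.
by rewrite addn0 (leq_trans (count_size _ _)) // size_take; case: ifP; lia.
Qed.

Lemma count_le_order_stat (s : seq nat) (j : nat) :
  j < size s -> j < count (fun y => y <= order_stat s j) s.
Proof.
move=> js; rewrite -count_sort_leq -[sort leq s](cat_take_drop j.+1) count_cat.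
have take_le : all (fun y => y <= order_stat s j) (take j.+1 (sort leq s)).
  apply/allP => y /(nthP 0) [i]; rewrite size_take size_sort => hi <-.
  have ij : i <= j by move: hi; case: ifP; lia.
  by rewrite nth_take //; apply: order_stat_mono.
by move: take_le; rewrite all_count => /eqP ->; rewrite size_take size_sort; case: ifP; lia.
Qed.

Lemma order_stat_map_leD (I : Type) (e : seq I) (f g : I -> nat) (d : nat) :
  (forall i, g i <= f i + d) ->
  forall j, order_stat (map g e) j <= order_stat (map f e) j + d.
Proof.
move=> gfd j; case: (ltnP j (size e)) => je; last first.
  by rewrite /order_stat !nth_default ?size_sort ?size_map.
rewrite leqNgt; apply/negP => ltb.
have := @count_le_order_stat (map f e) j; rewrite size_map => /(_ je).
have := @count_lt_order_stat (map g e) j; rewrite size_map => /(_ je).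
have : count (fun y => y <= order_stat (map f e) j) (map f e)
       <= count (fun y => y < order_stat (map g e) j) (map g e).
  by rewrite !count_map; apply: sub_count => i /=; have := gfd i; lia.
lia.
Qed.

Local Open Scope ring_scope.

Lemma medE (s : seq nat) :
  med s = ((order_stat s (size s).-1./2)%:R + (order_stat s (size s)./2)%:R) / 2%:R.
Proof.
rewrite /med /order_stat size_sort; case: ifP => odd_s.
  have -> : (size s).-1./2 = (size s)./2 by lia.
  lra.
by have -> : ((size s)./2.-1 = (size s).-1./2)%N by lia.
Qed.

Lemma med_ge0 (s : seq nat) : 0 <= med s.
Proof. by rewrite medE divr_ge0 ?addr_ge0 ?ler0n. Qed.

Lemma zmed_bounds (s : seq nat) :
  (zmed s)%:R <= med s + 2%:R^-1 < (zmed s).+1%:R.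
Proof.
have := floor_itv (med s + 2%:R^-1).
have := floor_ge0 (med s + 2%:R^-1); rewrite addr_ge0 ?med_ge0 // /zmed /round_nearest.
by case: (Num.floor _) => // n _; rewrite /= -(natr1 n) intrD.
Qed.

Lemma order_stat_lomed_le_himed (s : seq nat) :
  (order_stat s (size s).-1./2 <= order_stat s (size s)./2)%N.
Proof.
have [->|s_gt0] := posnP (size s); first exact: leqnn.
by apply: order_stat_mono; lia.
Qed.

Lemma zmed_between (s : seq nat) :
  (order_stat s (size s).-1./2 <= zmed s <= order_stat s (size s)./2)%N.
Proof.
have := zmed_bounds s; rewrite medE -(natr1 (zmed s)) => /andP[zle ltz].
have : (order_stat s (size s).-1./2)%:R <= (order_stat s (size s)./2)%:R :> rat.
  by rewrite ler_nat order_stat_lomed_le_himed.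
by move=> lohi; apply/andP; split; rewrite -ltnS -(ltr_nat rat) -natr1; lra.
Qed.

Lemma med_map_leD (I : Type) (e : seq I) (f g : I -> nat) (d : nat) :
  (forall i, g i <= f i + d)%N -> med (map g e) <= med (map f e) + d%:R.
Proof.
move=> gfd; rewrite !medE !size_map.
have le_stat j : (order_stat (map g e) j)%:R <= (order_stat (map f e) j)%:R + d%:R :> rat.
  by rewrite -natrD ler_nat order_stat_map_leD.
have := le_stat (size e).-1./2; have := le_stat (size e)./2; lra.
Qed.

Lemma zmed_map_leD (I : Type) (e : seq I) (f g : I -> nat) (d : nat) :
  (forall i, g i <= f i + d)%N -> (zmed (map g e) <= zmed (map f e) + d)%N.
Proof.
move=> /(@med_map_leD _ e) le_med; rewrite -ltnS -(ltr_nat rat) -natr1 natrD.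
have /andP[zg _] := zmed_bounds (map g e).
have /andP[_ fz] := zmed_bounds (map f e); rewrite -(natr1 (zmed _)) in fz.
lra.
Qed.

Local Close Scope ring_scope.

Lemma zmed_ub (s : seq nat) (B : nat) : {in s, forall x, x <= B} -> zmed s <= B.
Proof.
by move=> sB; have /andP[_ /leq_trans->] := zmed_between s; rewrite ?order_stat_ub.
Qed.

Lemma zmed_count (s : seq nat) :
  2 * count (fun y => y < zmed s) s <= size s <= 2 * count (fun y => y <= zmed s) s.
Proof.
have [s0|s_gt0] := posnP (size s).
  by have := count_size (fun y => y < zmed s) s; lia.
have /andP[lo_z z_hi] := zmed_between s.
have lt_hi : count (fun y => y < zmed s) s <= count (fun y => y < order_stat s (size s)./2) s.
  by apply: sub_count => y /=; lia.
have le_lo : count (fun y => y <= order_stat s (size s).-1./2) s <= count (fun y => y <= zmed s) s.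
  by apply: sub_count => y /=; lia.
have := @count_lt_order_stat s (size s)./2; have := @count_le_order_stat s (size s).-1./2.
lia.
Qed.

Lemma sum_dist_le (s : seq nat) (z c : nat) (p : pred nat) :
  (forall y, p y -> `|c - y| = `|z - y| + `|c - z|) ->
  count (predC p) s <= count p s ->
  \sum_(y <- s) `|z - y| <= \sum_(y <- s) `|c - y|.
Proof.
move=> hp le_count.
have balance : \sum_(y <- s) `|z - y| + `|c - z| * count p s
               <= \sum_(y <- s) `|c - y| + `|c - z| * count (predC p) s.
  elim: s {le_count} => [|y s IH]; first by rewrite !big_nil.
  rewrite !big_cons /= !mulnDr; case: (boolP (p y)) => py /=.
    by have := hp y py; lia.
  lia.
have := leq_mul2l `|c - z| (count (predC p) s) (count p s); rewrite le_count orbT.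
lia.
Qed.

Lemma zmed_sum_dist_min (s : seq nat) (c : nat) :
  \sum_(y <- s) `|zmed s - y| <= \sum_(y <- s) `|c - y|.
Proof.
have /andP[lt_half le_half] := zmed_count s.
have [zc|cz] := leqP (zmed s) c.
- apply: (@sum_dist_le _ _ _ (fun y => y <= zmed s)); first by move=> y /=; lia.
  by have := count_predC (fun y => y <= zmed s) s; lia.
- apply: (@sum_dist_le _ _ _ (fun y => zmed s <= y)); first by move=> y /=; lia.
  have lt_count : count (predC (fun y => zmed s <= y)) s = count (fun y => y < zmed s) s.
    by apply: eq_count => y /=; rewrite -ltnNge.
  by have := count_predC (fun y => zmed s <= y) s; rewrite lt_count; lia.
Qed.

Lemma find_iota0 (p : pred nat) (n k : nat) :
  k < n -> p k -> (forall j, j < k -> ~~ p j) -> find p (iota 0 n) = k.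
Proof.
move=> kn pk before_k; rewrite -(subnKC (ltnW kn)) iotaD find_cat.
have -> : has p (iota 0 k) = false.
  by apply/negbTE/hasPn => j; rewrite mem_iota => /andP[_ /before_k].
have /prednK <- : 0 < n - k by rewrite subn_gt0.
by rewrite size_iota add0n /= pk addn0.
Qed.

Definition rooted (T : finType) (rt : T) (par : T -> option T) : Prop :=
  par rt = None /\ forall v, anc par rt v.

Lemma phylo_rooted (T : finType) (rt : T) (par : T -> option T) :
  is_phylo rt par -> rooted rt par.
Proof. by case. Qed.

Section RootedTree.
Variables (T : finType) (rt : T) (par : T -> option T).
Hypothesis tree_rooted : rooted rt par.
Let par_rt : par rt = None := proj1 tree_rooted.
Let anc_rt : forall v, anc par rt v := proj2 tree_rooted.

Lemma iterp_add (m n : nat) (y : T) :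
  iterp par (m + n) y = obind (iterp par m) (iterp par n y).
Proof. by elim: m => [|m IH] /=; [case: iterp | rewrite IH; case: iterp]. Qed.

Lemma iterp_root (k : nat) : iterp par k.+1 rt = None.
Proof. by rewrite -addn1 iterp_add /= par_rt. Qed.

Definition height (v : T) : nat := find (fun n => iterp par n v == Some rt) (iota 0 #|T|).

Lemma height_spec (v : T) : iterp par (height v) v = Some rt /\ height v < #|T|.
Proof.
have has_rt : has (fun n => iterp par n v == Some rt) (iota 0 #|T|).
  have /existsP[n rt_n] := anc_rt v.
  by apply/hasP; exists (nat_of_ord n); rewrite // mem_iota /=.
have := nth_find 0 has_rt; move: has_rt; rewrite has_find size_iota => lt_card.
by rewrite nth_iota // add0n => /eqP.
Qed.

Lemma height_unique (n : nat) (v : T) : iterp par n v = Some rt -> n = height v.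
Proof.
have [hv _] := height_spec v.
have above_rt a b : a < b -> iterp par a v = Some rt -> iterp par b v = None.
  by move=> ab ha; rewrite -(subnK ab) addnS -addSn iterp_add ha; apply: iterp_root.
move=> hn; case: (ltngtP n (height v)) => // [/above_rt/(_ hn)|/above_rt/(_ hv)].
  by rewrite hv.
by rewrite hn.
Qed.

Lemma height_iterp (k : nat) (w u : T) :
  iterp par k w = Some u -> height w = height u + k.
Proof.
have [hu _] := height_spec u.
by move=> hk; apply/esym/height_unique; rewrite iterp_add hk.
Qed.

Lemma height_par (v p : T) : par v = Some p -> height v = (height p).+1.
Proof. by move=> hp; rewrite (@height_iterp 1 v p) ?addn1. Qed.

Lemma ancP (x y : T) : reflect (exists k, iterp par k y = Some x) (anc par x y).
Proof.
apply: (iffP existsP) => [[n /eqP]|[k hk]]; first by exists n.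
have k_lt : k < #|T| by have [_] := height_spec y; rewrite (height_iterp hk); lia.
by exists (Ordinal k_lt); apply/eqP.
Qed.

Lemma anc_refl (x : T) : anc par x x.
Proof. by apply/ancP; exists 0. Qed.

Lemma anc_trans (x y z : T) : anc par x y -> anc par y z -> anc par x z.
Proof.
by move=> /ancP[k1 h1] /ancP[k2 h2]; apply/ancP; exists (k1 + k2); rewrite iterp_add h2.
Qed.

Lemma anc_par (v p : T) : par v = Some p -> anc par p v.
Proof. by move=> hp; apply/ancP; exists 1. Qed.

Lemma anc_height (u w : T) : anc par u w -> height u <= height w.
Proof. by move=> /ancP[k /height_iterp->]; rewrite leq_addr. Qed.

Lemma iterp_common_anc (u w x : T) : anc par u x -> anc par w x ->
  height u <= height w -> iterp par (height w - height u) w = Some u.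
Proof.
move=> /ancP[a ha] /ancP[b hb] uw.
have ea := height_iterp ha; have eb := height_iterp hb.
have -> : height w - height u = a - b by lia.
have ba : b <= a by lia.
by rewrite -ha -{2}(subnK ba) iterp_add hb.
Qed.

Lemma anc_common_anc (u w x : T) :
  anc par u x -> anc par w x -> height u <= height w -> anc par u w.
Proof.
by move=> ux wx uw; apply/ancP; exists (height w - height u); apply: iterp_common_anc ux wx uw.
Qed.

Lemma anc_height_eq (u w : T) : anc par u w -> height u = height w -> u = w.
Proof.
move=> /ancP[k hk]; rewrite (height_iterp hk) -[X in X = _]addn0 => /eqP.
by rewrite eqn_add2l => /eqP k0; move: hk; rewrite -k0 => -[].
Qed.

Lemma anc_antisym (u w : T) : anc par u w -> anc par w u -> u = w.
Proof.
by move=> uw wu; apply/(anc_height_eq uw)/eqP; rewrite eqn_leq (anc_height uw) (anc_height wu).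
Qed.

Lemma anc_at_height (k : nat) (y : T) :
  k <= height y -> exists2 u, anc par u y & height u = height y - k.
Proof.
have [hy _] := height_spec y; move=> ky; move: hy.
rewrite -{1}(subnK ky) iterp_add; case hk: (iterp par k y) => [u|] //= _.
by exists u; [apply/ancP; exists k | rewrite (height_iterp hk) addnK].
Qed.

Lemma reach_height (n : nat) (u w : T) :
  reach par n u w -> `|height u - height w| <= n.
Proof.
elim: n u => [|n IH] u /=; first by move/eqP->; lia.
case/existsP => x /andP[/orP[] /eqP/height_par + /IH]; lia.
Qed.

Lemma reach_iterp_down (k : nat) (u w : T) : iterp par k w = Some u -> reach par k u w.
Proof.
elim: k u => [|k IH] u /=; first by case=> ->.
case hk: (iterp par k w) => [x|] //= hx; apply/existsP; exists x.
by rewrite /adj hx eqxx orbT IH.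
Qed.

Lemma reach_iterp_up (k : nat) (u w : T) : iterp par k w = Some u -> reach par k w u.
Proof.
elim: k w => [|k IH] w /=; first by case=> ->.
rewrite -/(iterp par k.+1 w) -addn1 iterp_add /=.
case hw: (par w) => [p|] //= hp; apply/existsP; exists p.
by rewrite /adj hw eqxx IH.
Qed.

Lemma dist_iterp (k : nat) (w u : T) :
  iterp par k w = Some u -> dist par u w = k /\ dist par w u = k.
Proof.
move=> hk; have hw := height_iterp hk; have [_ w_lt] := height_spec w.
split; apply: find_iota0 => [||j jk].
- lia.
- exact: reach_iterp_down hk.
- by apply/negP => /reach_height; lia.
- lia.
- exact: reach_iterp_up hk.
- by apply/negP => /reach_height; lia.
Qed.

Lemma dist_anc (u w : T) : anc par u w -> dist par w u = height w - height u.
Proof. by move=> /ancP[k hk]; rewrite (height_iterp hk) addKn; case: (dist_iterp hk). Qed.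

Lemma dist_common_anc (a b m : T) :
  anc par a m -> anc par b m -> dist par a b = `|height a - height b|.
Proof.
move=> am bm; case: (leqP (height a) (height b)) => ab.
  by case: (dist_iterp (iterp_common_anc am bm ab)) => -> _; lia.
by case: (dist_iterp (iterp_common_anc bm am (ltnW ab))) => _ ->; lia.
Qed.

Lemma depth_height (v : T) : depth rt par v = height v.
Proof. by case: (dist_iterp (proj1 (height_spec v))). Qed.

Lemma lca_anc (L : {set T}) (x : T) : x \in L -> anc par (lca rt par L) x.
Proof.
rewrite /lca; case: arg_maxnP => [|c /forall_inP c_anc _]; last exact: c_anc.
by apply/forall_inP.
Qed.

Lemma anc_lca (L : {set T}) (x0 w : T) :
  x0 \in L -> {in L, forall x, anc par w x} -> anc par w (lca rt par L).
Proof.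
move=> Lx0 w_anc; rewrite /lca; case: arg_maxnP => [|c /forall_inP c_anc c_max].
  by apply/forall_inP.
apply: (anc_common_anc (w_anc _ Lx0) (c_anc _ Lx0)).
by rewrite -!depth_height; apply/c_max/forall_inP.
Qed.

Lemma lca_set1 (a : T) : lca rt par [set a] = a.
Proof.
apply: anc_antisym; first by rewrite lca_anc ?set11.
by apply: (@anc_lca _ a); rewrite ?set11 // => x /set1P->; apply: anc_refl.
Qed.

Lemma anc_leaf (v : T) : exists2 x, is_leaf par x & anc par v x.
Proof.
move: {2}(#|T| - height v) (leqnn (#|T| - height v)) => n.
elim: n v => [|n IH] v hn; first by have [_] := height_spec v; lia.
have [leaf_v|] := boolP (is_leaf par v); first by exists v; last exact: anc_refl.
move=> /set0Pn[c]; rewrite inE => /eqP hc.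
have [_ c_lt] := height_spec c; have hcv := height_par hc.
have /IH[x leaf_x cx] : #|T| - height c <= n by lia.
by exists x => //; apply: anc_trans (anc_par hc) cx.
Qed.

Lemma leaf_anc (x y : T) : is_leaf par x -> anc par x y -> y = x.
Proof.
move=> /eqP leaf_x /ancP[[|k] /=]; first by case.
case: (iterp par k y) => [c|] //= hc.
by have := in_set0 c; rewrite -leaf_x inE hc eqxx.
Qed.

End RootedTree.

Section Reconciliation.
Variables (TP : finType) (rP : TP) (parP : TP -> option TP).
Variables (TH : finType) (rH : TH) (parH : TH -> option TH).
Variable phi : TP -> TH.
Hypotheses (P_rooted : rooted rP parP) (H_rooted : rooted rH parH).

Local Notation m := (mlca parP rH parH phi).
Local Notation hgt := (height rH parH).
Local Notation recon := (is_recon parP parH phi).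

Lemma recon_anc (psi : TP -> TH) (v x : TP) :
  recon psi -> anc parP v x -> anc parH (psi v) (psi x).
Proof.
move=> [_ psi_par] /(ancP P_rooted)[k]; elim: k v => [|k IH] v /=.
  by case=> ->; apply: (anc_refl H_rooted).
case hk: (iterp parP k x) => [y|] //= hy.
exact: (anc_trans H_rooted (psi_par _ _ hy) (IH _ hk)).
Qed.

Lemma mlca_anc_phi (v x : TP) : x \in leaves_below parP v -> anc parH (m v) (phi x).
Proof. by move=> xv; apply: (lca_anc H_rooted); apply: imset_f. Qed.

Lemma anc_mlca (v : TP) (w : TH) :
  {in leaves_below parP v, forall x, anc parH w (phi x)} -> anc parH w (m v).
Proof.
move=> w_anc; have [x leaf_x vx] := anc_leaf P_rooted v.
apply: (anc_lca H_rooted (x0 := phi x)); first by apply: imset_f; rewrite inE leaf_x.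
by move=> _ /imsetP[y yv ->]; apply: w_anc.
Qed.

Lemma mlca_mono (v v' : TP) : anc parP v v' -> anc parH (m v) (m v').
Proof.
move=> vv'; apply: anc_mlca => x; rewrite inE => /andP[leaf_x v'x].
by apply: mlca_anc_phi; rewrite inE leaf_x (anc_trans P_rooted vv' v'x).
Qed.

Lemma recon_anc_mlca (psi : TP -> TH) (v : TP) : recon psi -> anc parH (psi v) (m v).
Proof.
move=> psi_recon; apply: anc_mlca => x; rewrite inE => /andP[leaf_x vx].
by rewrite -(proj1 psi_recon x leaf_x); apply: recon_anc.
Qed.

Lemma mlca_leaf (x : TP) : is_leaf parP x -> m x = phi x.
Proof.
move=> leaf_x; rewrite /mlca.
have -> : leaves_below parP x = [set x].
  apply/setP => y; rewrite !inE; apply/andP/eqP => [[_ /(leaf_anc P_rooted leaf_x)]|->] //.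
  by rewrite leaf_x (anc_refl P_rooted).
by rewrite imset_set1 (lca_set1 H_rooted).
Qed.

Variables (l : nat) (psis : 'I_l -> TP -> TH).
Hypothesis psis_recon : forall i, recon (psis i).

Local Notation pmed := (psi_med parP rH parH phi psis).
Local Notation depths v := [seq dist parH (m v) (psis i v) | i <- enum 'I_l].

Lemma dist_mlca (psi : TP -> TH) (v : TP) :
  recon psi -> dist parH (m v) (psi v) = hgt (m v) - hgt (psi v).
Proof. by move=> psi_recon; rewrite (dist_anc H_rooted (recon_anc_mlca v psi_recon)). Qed.

Lemma zmed_depths_le (v : TP) : zmed (depths v) <= hgt (m v).
Proof. by apply: zmed_ub => _ /mapP[i _ ->]; rewrite dist_mlca ?leq_subr. Qed.

Lemma psi_med_spec (v : TP) :
  anc parH (pmed v) (m v) /\ hgt (pmed v) = hgt (m v) - zmed (depths v).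
Proof.
rewrite /psi_med; case: pickP => [w /andP[wm /eqP]|none].
  by rewrite (dist_anc H_rooted wm) => <- /=; split => //; have := anc_height H_rooted wm; lia.
have [u um hu] := anc_at_height H_rooted (zmed_depths_le v).
by have := none u; rewrite um (dist_anc H_rooted um) hu subKn ?zmed_depths_le ?eqxx.
Qed.

Lemma psi_med_leaf (x : TP) : is_leaf parP x -> pmed x = phi x.
Proof.
move=> leaf_x; have [anc_med h_med] := psi_med_spec x.
have z0 : zmed (depths x) = 0.
  apply/eqP; rewrite -leqn0; apply: zmed_ub => _ /mapP[i _ ->].
  rewrite (proj1 (psis_recon i) x leaf_x) mlca_leaf //.
  by rewrite (dist_anc H_rooted (anc_refl H_rooted _)) subnn.
rewrite -(mlca_leaf leaf_x); apply: (anc_height_eq H_rooted anc_med).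
by rewrite h_med z0 subn0.
Qed.

Lemma psi_med_par (v v' : TP) : parP v' = Some v -> anc parH (pmed v) (pmed v').
Proof.
move=> hv'; have mm := mlca_mono (anc_par P_rooted hv').
have [med_v h_v] := psi_med_spec v; have [med_v' h_v'] := psi_med_spec v'.
have shift : zmed (depths v') <= zmed (depths v) + (hgt (m v') - hgt (m v)).
  apply: zmed_map_leD => i.
  have := anc_height H_rooted (recon_anc (psis_recon i) (anc_par P_rooted hv')).
  have := anc_height H_rooted (recon_anc_mlca v (psis_recon i)).
  have := anc_height H_rooted (recon_anc_mlca v' (psis_recon i)).
  rewrite !dist_mlca //; lia.
apply: (anc_common_anc H_rooted (anc_trans H_rooted med_v mm) med_v').
have := anc_height H_rooted mm; have := zmed_depths_le v; have := zmed_depths_le v'.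
lia.
Qed.

Lemma psi_med_is_recon : recon pmed.
Proof. by split; [exact: psi_med_leaf | exact: psi_med_par]. Qed.

Lemma psi_med_sum_dist_min (psi : TP -> TH) (v : TP) : recon psi ->
  \sum_(i < l) dist parH (pmed v) (psis i v) <= \sum_(i < l) dist parH (psi v) (psis i v).
Proof.
move=> psi_recon; have [med_v h_v] := psi_med_spec v.
have sum_depths (a : TH) : anc parH a (m v) ->
    \sum_(i < l) dist parH a (psis i v) = \sum_(y <- depths v) `|(hgt (m v) - hgt a) - y|.
  move=> am; rewrite big_map big_enum /=; apply: eq_bigr => i _.
  have im := recon_anc_mlca v (psis_recon i).
  rewrite (dist_common_anc H_rooted am im) dist_mlca //.
  by have := anc_height H_rooted am; have := anc_height H_rooted im; lia.
rewrite (sum_depths _ med_v) (sum_depths _ (recon_anc_mlca v psi_recon)) h_v.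
rewrite subKn ?zmed_depths_le //.
exact: zmed_sum_dist_min.
Qed.

End Reconciliation.

Theorem mainTheorem4
  (TP : finType) (rP : TP) (parP : TP -> option TP)
  (TH : finType) (rH : TH) (parH : TH -> option TH)
  (phi : TP -> TH) :
  is_phylo rP parP -> is_phylo rH parH ->
  (forall x, is_leaf parP x -> is_leaf parH (phi x)) ->
  forall (l : nat) (psis : 'I_l -> TP -> TH),
  0 < l ->
  (forall i, is_recon parP parH phi (psis i)) ->
  is_recon parP parH phi (psi_med parP rH parH phi psis) /\
  forall psi : TP -> TH, is_recon parP parH phi psi ->
    \sum_(i < l) dpath parH (psi_med parP rH parH phi psis) (psis i)
    <= \sum_(i < l) dpath parH psi (psis i).
Proof.
move=> /phylo_rooted P_rooted /phylo_rooted H_rooted _ l psis _ psis_recon.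
split; first exact: (psi_med_is_recon P_rooted H_rooted psis_recon).
move=> psi psi_recon; rewrite /dpath exchange_big [X in _ <= X]exchange_big /=.
apply: leq_sum => v _.
exact: (psi_med_sum_dist_min P_rooted H_rooted psis_recon _ psi_recon).
Qed.
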